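(* Consider the Lorenz-Hamilton system on $\mathbb{R}^3$ $$\dot x_1=\tfrac12x_2,\qquad \dot x_2=-x_1x_3,\qquad \dot x_3=x_1x_2 ,$$ with equilibria $e_0=(0,0,0)$, $e_1^m=(m,0,0)$, $e_3^m=(0,0,m)$ for $m\in\mathbb{R}\setminus\{0\}$. Then: (i) $e_0$ and $e_1^m$ ($m\neq0$) are nonlinear stable; (ii) $e_3^m$ is nonlinear stable for $m>0$ and unstable for $m<0$.
   Context: Nonlinear stable means stable in the sense of Lyapunov: for every neighbourhood $U$ of the equilibrium there is a neighbourhood $V$ such that every trajectory starting in $V$ remains in $U$ for all $t\ge0$; unstable means not Lyapunov stable. *)

(* concrete reals R, with Coquelicot for derivatives and
   neighbourhoods (filter [locally] on the product uniform space R*R*R,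
   whose topology is the standard Euclidean topology of R^3). *)
From Stdlib Require Import Reals.
From Coquelicot Require Import Coquelicot.
Open Scope R_scope.

Definition state := ((R * R) * R)%type.
Definition c1 (p : state) : R := fst (fst p).
Definition c2 (p : state) : R := snd (fst p).
Definition c3 (p : state) : R := snd p.

Definition LH_trajectory (x : R -> state) : Prop :=
  forall t, 0 <= t ->
    is_derive (fun s => c1 (x s)) t (1/2 * c2 (x t)) /\
    is_derive (fun s => c2 (x s)) t (- (c1 (x t) * c3 (x t))) /\
    is_derive (fun s => c3 (x s)) t (c1 (x t) * c2 (x t)).

Definition LH_nonlinear_stable (e : state) : Prop :=
  forall U : state -> Prop, locally e U ->
    exists V : state -> Prop, locally e V /\
      forall x : R -> state, LH_trajectory x -> V (x 0) ->
        forall t, 0 <= t -> U (x t).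

Definition LH_unstable (e : state) : Prop := ~ LH_nonlinear_stable e.

(* Along every trajectory the energy x2^2 + x3^2 and the Casimir x1^2 - x3 are
   conserved.  Near e0, e1^m and e3^m (m > 0) the common level sets of these two
   functions are small around the equilibrium (for e1^m, once the sign of x1 is fixed,
   which the flow preserves since x1 stays away from 0), which gives Lyapunov
   stability.  For m < 0 the point e3^m carries an explicit homoclinic orbit, starting
   arbitrarily close to e3^m and reaching |x1| = sqrt(-2m), so e3^m is unstable. *)

From Stdlib Require Import Reals Lra Psatz.
From Coquelicot Require Import Coquelicot.
Open Scope R_scope.

Lemma is_derive_continuity_pt (f : R -> R) (t l : R) :
  is_derive f t l -> continuity_pt f t.
Proof.
  intros Hf. apply continuity_pt_filterlim.
  apply (ex_derive_continuous f t). exists l; exact Hf.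
Qed.

Lemma is_derive_0_const (g : R -> R) :
  (forall s, 0 <= s -> is_derive g s 0) -> forall t, 0 <= t -> g t = g 0.
Proof.
  intros Hg t Ht.
  destruct (MVT_gen g 0 t (fun _ => 0)) as [c [_ Hc]].
  - intros s Hs. rewrite Rmin_left in Hs by lra. apply Hg. lra.
  - intros s Hs. rewrite Rmin_left in Hs by lra.
    apply is_derive_continuity_pt with 0, Hg. lra.
  - lra.
Qed.

Lemma continuity_pt_sign_stable (f : R -> R) :
  (forall s, 0 <= s -> continuity_pt f s) -> (forall s, 0 <= s -> f s <> 0) ->
  0 < f 0 -> forall t, 0 <= t -> 0 < f t.
Proof.
  intros Hcont Hnz Hf0 t Ht.
  destruct (Rlt_or_le 0 (f t)) as [Hft | Hft]; [exact Hft | exfalso].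
  assert (Hft' : f t < 0) by (destruct Hft; [assumption | exfalso; now apply (Hnz t)]).
  destruct (Ranalysis5.IVT_interv (fun s => - f s) 0 t) as [z [Hz Hfz]].
  - intros s Hs. apply continuity_pt_opp, Hcont. lra.
  - destruct (Req_dec t 0) as [-> | ]; lra.
  - lra.
  - lra.
  - apply (Hnz z); [lra |]. lra.
Qed.

Lemma Rabs_lt_of_sqr_lt (u e : R) : 0 < e -> u ^ 2 < e ^ 2 -> Rabs u < e.
Proof. intros He Hu. apply Rabs_def1; nra. Qed.

Lemma at_right_0_ex (P : R -> Prop) : at_right 0 P -> exists d, 0 < d /\ P d.
Proof.
  intros [eps H]. assert (Heps : 0 < eps) by apply cond_pos.
  exists (eps / 2). split; [lra |]. apply H; [| lra].
  change (Rabs (eps / 2 - 0) < eps). rewrite Rabs_right; lra.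
Qed.

Lemma at_right_0_mul_le (k a : R) : 0 < k -> 0 < a -> at_right 0 (fun d => k * d <= a).
Proof.
  intros Hk Ha. exists (mkposreal (a / k) (Rdiv_lt_0_compat _ _ Ha Hk)).
  intros d Hd _. change (Rabs (d - 0) < a / k) in Hd.
  apply Rabs_def2 in Hd.
  enough (d * k < a) by lra. apply Rlt_div_r; lra.
Qed.

Lemma ball_state (e p : state) (d : R) :
  ball e d p <->
  Rabs (c1 p - c1 e) < d /\ Rabs (c2 p - c2 e) < d /\ Rabs (c3 p - c3 e) < d.
Proof.
  destruct e as [[e1 e2] e3], p as [[p1 p2] p3]. unfold c1, c2, c3; simpl.
  split; [intros [[H1 H2] H3] | intros [H1 [H2 H3]]]; repeat split; assumption.
Qed.

Lemma LH_stable_of_ball (e : state) :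
  (forall eps, 0 < eps -> exists d, 0 < d /\
     forall x, LH_trajectory x -> ball e d (x 0) -> forall t, 0 <= t -> ball e eps (x t)) ->
  LH_nonlinear_stable e.
Proof.
  intros H U [eps HU].
  destruct (H eps (cond_pos eps)) as [d [Hd Hx]].
  exists (ball e d). split.
  - exact (locally_ball e (mkposreal d Hd)).
  - intros x Tx H0 t Ht. apply HU, (Hx x Tx H0 t Ht).
Qed.

Definition LH_energy (p : state) : R := c2 p ^ 2 + c3 p ^ 2.
Definition LH_casimir (p : state) : R := c1 p ^ 2 - c3 p.

Lemma LH_energy_conserved (x : R -> state) :
  LH_trajectory x -> forall t, 0 <= t -> LH_energy (x t) = LH_energy (x 0).
Proof.
  intros Hx. apply (is_derive_0_const (fun s => LH_energy (x s))).
  intros s Hs. destruct (Hx s Hs) as [_ [H2 H3]].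
  pose proof (is_derive_plus _ _ _ _ _ (is_derive_pow _ 2 _ _ H2) (is_derive_pow _ 2 _ _ H3)) as D.
  match type of D with is_derive _ _ ?l =>
    replace 0 with l by (unfold plus; simpl; ring) end.
  exact D.
Qed.

Lemma LH_casimir_conserved (x : R -> state) :
  LH_trajectory x -> forall t, 0 <= t -> LH_casimir (x t) = LH_casimir (x 0).
Proof.
  intros Hx. apply (is_derive_0_const (fun s => LH_casimir (x s))).
  intros s Hs. destruct (Hx s Hs) as [H1 [_ H3]].
  pose proof (is_derive_minus _ _ _ _ _ (is_derive_pow _ 2 _ _ H1) H3) as D.
  match type of D with is_derive _ _ ?l =>
    replace 0 with l by (unfold minus, plus, opp; simpl; field) end.
  exact D.
Qed.

Lemma LH_stable_of_level_balls (e : state) :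
  (forall eps, 0 < eps -> exists d, 0 < d /\
     forall p q, ball e d p -> LH_energy q = LH_energy p -> LH_casimir q = LH_casimir p ->
       ball e eps q) ->
  LH_nonlinear_stable e.
Proof.
  intros H. apply LH_stable_of_ball. intros eps Heps.
  destruct (H eps Heps) as [d [Hd Hlevel]].
  exists d. split; [exact Hd |]. intros x Hx H0 t Ht.
  apply (Hlevel (x 0)); [exact H0 | apply LH_energy_conserved | apply LH_casimir_conserved];
    assumption.
Qed.

Lemma origin_level_ball (eps d : R) (p q : state) :
  d <= 1 -> 2 * d <= eps -> 4 * d <= eps ^ 2 ->
  ball ((0, 0), 0) d p -> LH_energy q = LH_energy p -> LH_casimir q = LH_casimir p ->
  ball ((0, 0), 0) eps q.
Proof.
  destruct p as [[a b] c], q as [[u v] w].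
  rewrite !ball_state; unfold LH_energy, LH_casimir, c1, c2, c3; simpl.
  rewrite !Rminus_0_r. intros Hd1 Hd2 Hd3 [Ha [Hb Hc]] HE HC.
  apply Rabs_def2 in Ha, Hb, Hc.
  assert (Hv : v ^ 2 < (2 * d) ^ 2) by nra.
  assert (Hw : w ^ 2 < (2 * d) ^ 2) by nra.
  assert (Hw' : w < 2 * d) by nra.
  assert (Hu : u ^ 2 < eps ^ 2) by nra.
  repeat split; apply Rabs_lt_of_sqr_lt; nra.
Qed.

Lemma LH_stable_origin : LH_nonlinear_stable ((0, 0), 0).
Proof.
  apply LH_stable_of_level_balls. intros eps Heps.
  destruct (at_right_0_ex (fun d => 1 * d <= 1 /\ 2 * d <= eps /\ 4 * d <= eps ^ 2))
    as [d [Hd [H1 [H2 H3]]]].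
  { repeat apply filter_and; apply at_right_0_mul_le; nra. }
  exists d. split; [exact Hd |]. intros p q. apply origin_level_ball; lra.
Qed.

Lemma e3_level_ball (m eps d : R) (p q : state) :
  d <= 1 -> 4 * d <= m -> 2 * d <= eps -> (6 * m + 4) * d <= eps ^ 2 ->
  ball ((0, 0), m) d p -> LH_energy q = LH_energy p -> LH_casimir q = LH_casimir p ->
  ball ((0, 0), m) eps q.
Proof.
  destruct p as [[a b] c], q as [[u v] w].
  rewrite !ball_state; unfold LH_energy, LH_casimir, c1, c2, c3; simpl.
  rewrite !Rminus_0_r. intros Hd1 Hdm Hd2 Hd3 [Ha [Hb Hc]] HE HC.
  apply Rabs_def2 in Ha, Hb, Hc.
  assert (Hd : 0 < d) by lra.
  assert (Hw_lo : m - 2 * d < w) by nra.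
  assert (Hw_hi : w < m + 2 * d) by nra.
  assert (Hv : v ^ 2 < eps ^ 2) by nra.
  assert (Hu : u ^ 2 < eps ^ 2) by nra.
  repeat split; [apply Rabs_lt_of_sqr_lt; nra .. | apply Rabs_def1; lra].
Qed.

Lemma LH_stable_e3 (m : R) : 0 < m -> LH_nonlinear_stable ((0, 0), m).
Proof.
  intros Hm. apply LH_stable_of_level_balls. intros eps Heps.
  destruct (at_right_0_ex (fun d =>
      1 * d <= 1 /\ 4 * d <= m /\ 2 * d <= eps /\ (6 * m + 4) * d <= eps ^ 2))
    as [d [Hd [H1 [H2 [H3 H4]]]]].
  { repeat apply filter_and; apply at_right_0_mul_le; nra. }
  exists d. split; [exact Hd |]. intros p q. apply e3_level_ball; lra.
Qed.

Lemma e1_ball_sign (m d : R) (p : state) :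
  d <= Rabs m -> ball ((m, 0), 0) d p -> 0 < m * c1 p.
Proof.
  destruct p as [[a b] c]. rewrite ball_state; unfold c1; simpl.
  intros Hdm [Ha _]. apply Rabs_def2 in Ha.
  assert (Hsq : (a - m) ^ 2 < m ^ 2).
  { rewrite <- (pow2_abs m).
    assert (Hd : 0 < d) by lra.
    assert ((a - m) ^ 2 < d ^ 2) by nra.
    assert (d ^ 2 <= Rabs m ^ 2) by nra.
    lra. }
  nra.
Qed.

Lemma e1_level_ball (m eps d : R) (p q : state) :
  d <= 1 -> 2 * d <= eps ->
  (2 * Rabs m + 4) * d <= Rabs m ^ 2 / 2 -> (2 * Rabs m + 4) * d <= eps * Rabs m ->
  ball ((m, 0), 0) d p -> LH_energy q = LH_energy p -> LH_casimir q = LH_casimir p ->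
  c1 q <> 0 /\ (0 < m * c1 q -> ball ((m, 0), 0) eps q).
Proof.
  destruct p as [[a b] c], q as [[u v] w].
  rewrite !ball_state; unfold LH_energy, LH_casimir, c1, c2, c3; simpl.
  rewrite !Rminus_0_r. intros Hd1 Hd2 Hd3 Hd4 [Ha [Hb Hc]] HE HC.
  assert (HmM : - Rabs m <= m <= Rabs m).
  { pose proof (Rle_abs m). pose proof (Rle_abs (- m)). rewrite Rabs_Ropp in *. lra. }
  assert (HM2 : m ^ 2 = Rabs m ^ 2) by (symmetry; apply pow2_abs).
  set (M := Rabs m) in *.
  apply Rabs_def2 in Ha, Hb, Hc.
  assert (Hd : 0 < d) by lra.
  assert (HM : 0 < M) by nra.
  assert (Hv : v ^ 2 < (2 * d) ^ 2) by nra.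
  assert (Hw : w ^ 2 < (2 * d) ^ 2) by nra.
  assert (Hw' : - (2 * d) < w < 2 * d) by (split; nra).
  assert (Ham : - ((2 * M + 1) * d) <= a ^ 2 - m ^ 2 <= (2 * M + 1) * d) by (split; nra).
  assert (Hu : - ((2 * M + 4) * d) < u ^ 2 - m ^ 2 < (2 * M + 4) * d) by (split; nra).
  split.
  - intros ->. nra.
  - intros Hmu. repeat split; [| apply Rabs_lt_of_sqr_lt; nra ..].
    apply Rabs_lt_of_sqr_lt; [lra |].
    assert (Hum : M ^ 2 <= (u + m) ^ 2) by nra.
    assert (Hprod : (u - m) ^ 2 * (u + m) ^ 2 < (eps * M) ^ 2) by nra.
    nra.
Qed.

Lemma LH_stable_e1 (m : R) : m <> 0 -> LH_nonlinear_stable ((m, 0), 0).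
Proof.
  intros Hm. apply LH_stable_of_ball. intros eps Heps.
  assert (HM : 0 < Rabs m) by now apply Rabs_pos_lt.
  destruct (at_right_0_ex (fun d =>
      1 * d <= 1 /\ 2 * d <= eps /\
      (2 * Rabs m + 4) * d <= Rabs m ^ 2 / 2 /\ (2 * Rabs m + 4) * d <= eps * Rabs m))
    as [d [Hd [H1 [H2 [H3 H4]]]]].
  { repeat apply filter_and; apply at_right_0_mul_le; nra. }
  exists d. split; [exact Hd |]. intros x Hx H0.
  assert (Hlevel : forall s, 0 <= s ->
      c1 (x s) <> 0 /\ (0 < m * c1 (x s) -> ball ((m, 0), 0) eps (x s))).
  { intros s Hs. apply (e1_level_ball m eps d (x 0)); try lra; [exact H0 | |];
      [apply LH_energy_conserved | apply LH_casimir_conserved]; assumption. }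
  intros t Ht. apply (proj2 (Hlevel t Ht)).
  (* The orbit cannot cross the plane x1 = 0, so it stays near e1^m, not near e1^(-m). *)
  apply (continuity_pt_sign_stable (fun s => m * c1 (x s))); [| | | exact Ht].
  - intros s Hs. apply is_derive_continuity_pt with (m * (1 / 2 * c2 (x s))).
    apply is_derive_scal, (Hx s Hs).
  - intros s Hs. apply Rmult_integral_contrapositive_currified; [exact Hm | apply (Hlevel s Hs)].
  - apply (e1_ball_sign m d); [nra | exact H0].
Qed.

(* With E = exp (s (t0 - t) / 2) this is x1 = s sech (s (t - t0) / 2): the orbit leaves
   e3 at m = - s^2/2 as t -> -oo and returns to it as t -> +oo. *)
Definition homoclinic_point (s E : R) : state :=
  ((2 * s * E / (E ^ 2 + 1), 2 * s ^ 2 * E * (E ^ 2 - 1) / (E ^ 2 + 1) ^ 2),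
   4 * s ^ 2 * E ^ 2 / (E ^ 2 + 1) ^ 2 - s ^ 2 / 2).

Definition LH_homoclinic (s t0 t : R) : state :=
  homoclinic_point s (exp (s / 2 * (t0 - t))).

Lemma LH_homoclinic_trajectory (s t0 : R) : LH_trajectory (LH_homoclinic s t0).
Proof.
  intros t _. unfold LH_homoclinic, homoclinic_point, c1, c2, c3; simpl.
  assert (HE : 0 < exp (s / 2 * (t0 - t))) by apply exp_pos.
  split; [| split]; auto_derive; change (t0 + - t) with (t0 - t);
    set (E := exp (s / 2 * (t0 - t))) in *; try (intro; nra); field; nra.
Qed.

Lemma homoclinic_point_ball (s d L : R) :
  0 < s -> 1 <= L -> 2 * s + 4 * s ^ 2 <= d * L ->
  ball ((0, 0), - (s ^ 2 / 2)) d (homoclinic_point s L).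
Proof.
  intros Hs HL Hd. rewrite ball_state. unfold homoclinic_point, c1, c2, c3; cbn [fst snd].
  replace (4 * s ^ 2 * L ^ 2 / (L ^ 2 + 1) ^ 2 - s ^ 2 / 2 - - (s ^ 2 / 2))
    with (4 * s ^ 2 * L ^ 2 / (L ^ 2 + 1) ^ 2) by ring.
  rewrite !Rminus_0_r.
  assert (HL2 : 0 < L ^ 2 + 1) by nra.
  assert (HL4 : 0 < (L ^ 2 + 1) ^ 2) by nra.
  assert (Hx2 : 0 <= 2 * s ^ 2 * L * (L ^ 2 - 1)).
  { apply Rmult_le_pos; [| nra]. apply Rmult_le_pos; nra. }
  assert (Hd0 : 0 < d) by nra.
  assert (HdL : L ^ 3 * (2 * s + 4 * s ^ 2) < d * (L ^ 2 + 1) ^ 2).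
  { apply Rle_lt_trans with (L ^ 3 * (d * L)); [apply Rmult_le_compat_l; nra |].
    nra. }
  repeat split; rewrite Rabs_pos_eq; try (apply Rdiv_le_0_compat; nra);
    apply Rlt_div_l; nra.
Qed.

Lemma LH_unstable_e3 (m : R) : m < 0 -> LH_unstable ((0, 0), m).
Proof.
  intros Hm Hstable.
  set (s := sqrt (- 2 * m)).
  assert (Hs : 0 < s) by (apply sqrt_lt_R0; lra).
  assert (Hms : m = - (s ^ 2 / 2)) by (unfold s; rewrite pow2_sqrt; lra).
  rewrite Hms in Hstable. clearbody s.
  destruct (Hstable (fun p => Rabs (c1 p) < s)) as [V [[d HV] Hflow]].
  { exists (mkposreal s Hs). intros p Hp. apply ball_state in Hp.
    destruct Hp as [Hp _]. cbn in Hp. rewrite Rminus_0_r in Hp. exact Hp. }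
  assert (Hd : 0 < d) by apply cond_pos.
  set (L := (2 * s + 4 * s ^ 2) / d + 1).
  assert (HL : 1 <= L).
  { assert (0 < (2 * s + 4 * s ^ 2) / d) by (apply Rdiv_lt_0_compat; nra). unfold L; lra. }
  assert (HdL : 2 * s + 4 * s ^ 2 <= d * L).
  { unfold L. rewrite Rmult_plus_distr_l.
    replace (d * ((2 * s + 4 * s ^ 2) / d)) with (2 * s + 4 * s ^ 2) by (field; lra). lra. }
  set (t0 := 2 * ln L / s).
  assert (Ht0 : 0 <= t0).
  { unfold t0. apply Rdiv_le_0_compat; [| lra].
    apply Rmult_le_pos; [lra |]. rewrite <- ln_1. apply ln_le; lra. }
  assert (Hstart : LH_homoclinic s t0 0 = homoclinic_point s L).
  { unfold LH_homoclinic. f_equal.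
    replace (s / 2 * (t0 - 0)) with (ln L) by (unfold t0; field; lra). apply exp_ln. lra. }
  assert (Hpeak : c1 (LH_homoclinic s t0 t0) = s).
  { unfold LH_homoclinic, homoclinic_point, c1; cbn [fst snd].
    rewrite Rminus_diag, Rmult_0_r, exp_0. field. }
  assert (Hnear : V (LH_homoclinic s t0 0)).
  { apply HV. rewrite Hstart. apply homoclinic_point_ball; assumption. }
  pose proof (Hflow _ (LH_homoclinic_trajectory s t0) Hnear t0 Ht0) as Hfar.
  rewrite Hpeak, Rabs_pos_eq in Hfar; lra.
Qed.

Theorem corollary4p5 :
  (LH_nonlinear_stable ((0, 0), 0) /\
   (forall m : R, m <> 0 -> LH_nonlinear_stable ((m, 0), 0))) /\
  ((forall m : R, 0 < m -> LH_nonlinear_stable ((0, 0), m)) /\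
   (forall m : R, m < 0 -> LH_unstable ((0, 0), m))).
Proof.
  split; split.
  - exact LH_stable_origin.
  - exact LH_stable_e1.
  - exact LH_stable_e3.
  - exact LH_unstable_e3.
Qed.
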